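(* Fix any total budget $\mathrm{TB}\in\mathbb N_0$. Every dyadic rational game form $n/2^k$, with $n\in\mathbb Z$ and $k\in\mathbb N$, is a number.
   Context: Game forms are defined recursively: $G=\{G^{\mathcal L}\mid G^{\mathcal R}\}$ with finite sets of Left and Right options, and finite birthday. $0=\{\varnothing\mid\varnothing\}$, $1=\{0\mid\varnothing\}$. Dyadic game forms: $1/2^0=1$, for $k\in\mathbb N$, $1/2^k=\{0\mid 1/2^{k-1}\}$; for $n\in\mathbb N_0$, $n/2^k$ is the disjunctive sum of $n$ copies of $1/2^k$ (with $0/2^k=0$), and $-n/2^k=\overline{n/2^k}$, where the conjugate is $\bar G=\{\overline{G^{\mathcal R}}\mid\overline{G^{\mathcal L}}\}$. The budget set for total budget $\mathrm{TB}$ is $\mathcal B=\{0,\dots,\mathrm{TB},\hat 0,\dots,\widehat{\mathrm{TB}}\}$: state $p$ (resp. $\hat p$) means Left holds $p$ dollars and Right holds $\mathrm{TB}-p$, and Right (resp. Left) holds the tie-breaking marker. Play of $(G,\tilde p)$: at every position (terminal ones included) both players bid simultaneously, Left $\ell\in\{0,\dots,p\}$, Right $r\in\{0,\dots,\mathrm{TB}-p\}$. If Left holds the marker (state $\hat p$): if $\ell>r$ Left moves to $(G^L,\widehat{p-\ell})$, or, including the marker (allowed when $\ell\ge r$), to $(G^L,p-\ell)$; if $\ell=r$ Left wins, the marker passes to Right, play continues at $(G^L,p-\ell)$; if $\ell<r$ Right moves to $(G^R,\widehat{p+r})$. Symmetrically when Right holds the marker (state $p$): if $r>\ell$ Right moves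 to $(G^R,p+r)$ or, including the marker, to $(G^R,\widehat{p+r})$; if $r=\ell$ Right wins, the marker passes to Left, play continues at $(G^R,\widehat{p+r})$; if $r<\ell$ Left moves to $(G^L,p-\ell)$. A player who wins a bid but has no option loses. $o(G,\tilde p)\in\{\mathrm L,\mathrm R\}$ is the winner under optimal play; $\mathrm L>\mathrm R$. Disjunctive sum $G+H=\{G^{\mathcal L}+H,G+H^{\mathcal L}\mid G^{\mathcal R}+H,G+H^{\mathcal R}\}$. $G\ge H$ means $o(G+X,\tilde p)\ge o(H+X,\tilde p)$ for all game forms $X$ and all $\tilde p\in\mathcal B$; $G=H$ means $G\ge H$ and $H\ge G$; $G>H$ means $G\ge H$ and not $H\ge G$. A game is a number if it is equal (as a game) to a game form all of whose options are numbers and with $G^L<G<G^R$ for all Left options $G^L$ and Right options $G^R$; recursively, a game form $G$ is a number if all its options are numbers and $G^L<G<G^R$ for all $G^L\in G^{\mathcal L}$, $G^R\in G^{\mathcal R}$. *)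

From mathcomp Require Import all_boot all_algebra.
From Stdlib Require List.

Set Implicit Arguments.
Unset Strict Implicit.
Unset Printing Implicit Defensive.

(* A game form {G^L | G^R}: finite lists of Left and Right options.
   Finite birthday is automatic (well-founded inductive type). *)
Inductive game : Type := Game : seq game -> seq game -> game.

Definition leftOpts (G : game) : seq game := let: Game L _ := G in L.
Definition rightOpts (G : game) : seq game := let: Game _ R := G in R.

Definition g0 : game := Game [::] [::].
Definition g1 : game := Game [:: g0] [::].

Fixpoint gconj (G : game) : game :=
  match G with Game L R => Game (map gconj R) (map gconj L) end.

Fixpoint gadd (G H : game) {struct G} : game :=
  match G with
  | Game GL GR =>
      let fix aux (H : game) : game :=
        match H with
        | Game HL HR =>
            Game ([seq gadd gl H | gl <- GL] ++ map aux HL)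
                 ([seq gadd gr H | gr <- GR] ++ map aux HR)
        end in
      aux H
  end.

Fixpoint halfpow (k : nat) : game :=
  match k with
  | 0 => g1
  | k'.+1 => Game [:: g0] [:: halfpow k']
  end.

Fixpoint ncopies (n : nat) (G : game) : game :=
  match n with
  | 0 => g0
  | 0.+1 => G
  | n'.+1 => gadd (ncopies n' G) G
  end.

Definition dyadic (n : int) (k : nat) : game :=
  match n with
  | Posz m => ncopies m (halfpow k)
  | Negz m => gconj (ncopies m.+1 (halfpow k))
  end.

(* Outcome of the bidding play of (G, p~) with total budget TB.
   p = Left's budget (Right holds TB - p); lm = true means Left holds the
   tie-breaking marker (state p-hat), lm = false means Right holds it (state p).
   Result: true = L wins, false = R wins.  o(G,p~) = L iff Left has a bid l
   such that for every Right bid r, Left wins the continuation under optimal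
   play (the bidding game is determined). *)
Fixpoint outcome (TB : nat) (G : game) (p : nat) (lm : bool) {struct G} : bool :=
  match G with
  | Game GL GR =>
      let leftMoves (q : nat) (ms : seq bool) :=
        has (fun gl => has (fun m => outcome TB gl q m) ms) GL in
      let rightMoves (q : nat) (ms : seq bool) :=
        all (fun gr => all (fun m => outcome TB gr q m) ms) GR in
      let res (l r : nat) : bool :=
        if lm then
          (if r < l then leftMoves (p - l) [:: true; false]
           else if l == r then leftMoves (p - l) [:: false]
           else rightMoves (p + r) [:: true])
        else
          (if l < r then rightMoves (p + r) [:: false; true]
           else if l == r then rightMoves (p + r) [:: true]
           else leftMoves (p - l) [:: false]) in
      has (fun l => all (fun r => res l r) (iota 0 (TB - p).+1)) (iota 0 p.+1)
  end.

Definition gge (TB : nat) (G H : game) : Prop :=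
  forall (X : game) (p : nat) (lm : bool), p <= TB ->
    outcome TB (gadd H X) p lm -> outcome TB (gadd G X) p lm.

Definition geq (TB : nat) (G H : game) : Prop := gge TB G H /\ gge TB H G.
Definition ggt (TB : nat) (G H : game) : Prop := gge TB G H /\ ~ gge TB H G.

Inductive isNumber (TB : nat) : game -> Prop :=
  | isNumber_intro (G H : game) :
      geq TB G H ->
      (forall HL, List.In HL (leftOpts H) -> isNumber TB HL) ->
      (forall HR, List.In HR (rightOpts H) -> isNumber TB HR) ->
      (forall HL, List.In HL (leftOpts H) -> ggt TB H HL) ->
      (forall HR, List.In HR (rightOpts H) -> ggt TB HR H) ->
      isNumber TB G.

(* Every dyadic form n/2^k with n >= 0 is equal to a finite sum S of forms 1/2^j, and
   such a sum is a number: a Left option of S drops a term 1/2^j and a Right option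
   replaces a term 1/2^(j+1) by 1/2^j, so (inducting on the sum) it suffices to know
   1/2^j > 0 and 1/2^j > 1/2^(j+1) in the presence of the other terms.
   The inequalities come from strategy copying.  Weigh a budget state by
   2p + [Left holds the marker].  Adding 1/2^j to a game G lets Left win from every state
   at least as heavy as some state won in G, and so does adding 1/2^j - 1/2^k for j < k;
   adding 1/2^k - 1/2^k does so as long as Left does not gain the marker.  Strictness is
   seen at the state where Left has no money but holds the marker: there 0 (hence S - S)
   is lost by Left, while 1/2^j and 1/2^j - 1/2^(j+1) are won.
   Forms with n < 0 are conjugates, and conjugation reverses the order because the
   bidding is determined: Left wins the conjugate of G with budget p exactly when Left
   loses G with budget TB - p and the marker on the other side. *)

From Pilot Require Import Defs.
From mathcomp Require Import all_boot all_algebra.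
From mathcomp Require Import zify.
(* Re-imported so that [geq] is the equality of games, not ssrnat's [geq]. *)
Import Defs.

Set Implicit Arguments.
Unset Strict Implicit.
Unset Printing Implicit Defensive.

Definition game_ind_in (P : game -> Prop)
  (IH : forall GL GR, (forall G, List.In G GL -> P G) ->
          (forall G, List.In G GR -> P G) -> P (Game GL GR)) :
  forall G, P G :=
  fix F G := let: Game GL GR := G in
    let fix Fs s : forall H, List.In H s -> P H :=
      match s with
      | [::] => fun H f => match f with end
      | H' :: s' => fun H hin =>
          match hin with
          | or_introl e => eq_ind H' P (F H') H e
          | or_intror h => Fs s' H h
          end
      end in
    IH GL GR (Fs GL) (Fs GR).

Lemma has_In T (a : pred T) s : has a s <-> exists x, List.In x s /\ a x.
Proof. exact: List.existsb_exists. Qed.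

Lemma all_In T (a : pred T) s : all a s <-> forall x, List.In x s -> a x.
Proof. exact: List.forallb_forall. Qed.

Lemma eq_has_In T (a b : pred T) s :
  (forall x, List.In x s -> a x = b x) -> has a s = has b s.
Proof.
elim: s => //= x s IHs eq_ab.
by rewrite eq_ab ?IHs // => [y Hy|]; [apply: eq_ab; right | left].
Qed.

Lemma eq_all_In T (a b : pred T) s :
  (forall x, List.In x s -> a x = b x) -> all a s = all b s.
Proof.
elim: s => //= x s IHs eq_ab.
by rewrite eq_ab ?IHs // => [y Hy|]; [apply: eq_ab; right | left].
Qed.

Lemma gameE G : G = Game (leftOpts G) (rightOpts G).
Proof. by case: G. Qed.

Lemma leftOpts_gadd G H :
  leftOpts (gadd G H) = map (gadd^~ H) (leftOpts G) ++ map (gadd G) (leftOpts H).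
Proof. by case: G; case: H. Qed.

Lemma rightOpts_gadd G H :
  rightOpts (gadd G H) = map (gadd^~ H) (rightOpts G) ++ map (gadd G) (rightOpts H).
Proof. by case: G; case: H. Qed.

Lemma in_cat_map (f g : game -> game) s1 s2 X :
  List.In X (map f s1 ++ map g s2) <->
  (exists2 Y, List.In Y s1 & X = f Y) \/ (exists2 Y, List.In Y s2 & X = g Y).
Proof.
rewrite List.in_app_iff !List.in_map_iff.
split=> [[[Y [<- HY]]|[Y [<- HY]]]|[[Y HY ->]|[Y HY ->]]].
- by left; exists Y.
- by right; exists Y.
- by left; exists Y.
- by right; exists Y.
Qed.

Lemma in_leftOpts_gadd G H X : List.In X (leftOpts (gadd G H)) <->
  (exists2 G', List.In G' (leftOpts G) & X = gadd G' H) \/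
  (exists2 H', List.In H' (leftOpts H) & X = gadd G H').
Proof. by rewrite leftOpts_gadd in_cat_map. Qed.

Lemma in_rightOpts_gadd G H X : List.In X (rightOpts (gadd G H)) <->
  (exists2 G', List.In G' (rightOpts G) & X = gadd G' H) \/
  (exists2 H', List.In H' (rightOpts H) & X = gadd G H').
Proof. by rewrite rightOpts_gadd in_cat_map. Qed.

Lemma in_leftOpts_gaddl G H G' :
  List.In G' (leftOpts G) -> List.In (gadd G' H) (leftOpts (gadd G H)).
Proof. by move=> HG'; apply/in_leftOpts_gadd; left; exists G'. Qed.

Lemma in_leftOpts_gaddr G H H' :
  List.In H' (leftOpts H) -> List.In (gadd G H') (leftOpts (gadd G H)).
Proof. by move=> HH'; apply/in_leftOpts_gadd; right; exists H'. Qed.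

Lemma in_rightOpts_gaddl G H G' :
  List.In G' (rightOpts G) -> List.In (gadd G' H) (rightOpts (gadd G H)).
Proof. by move=> HG'; apply/in_rightOpts_gadd; left; exists G'. Qed.

Lemma in_rightOpts_gaddr G H H' :
  List.In H' (rightOpts H) -> List.In (gadd G H') (rightOpts (gadd G H)).
Proof. by move=> HH'; apply/in_rightOpts_gadd; right; exists H'. Qed.

Lemma gadd_Game GL GR HL HR : gadd (Game GL GR) (Game HL HR) =
  Game (map (gadd^~ (Game HL HR)) GL ++ map (gadd (Game GL GR)) HL)
       (map (gadd^~ (Game HL HR)) GR ++ map (gadd (Game GL GR)) HR).
Proof. by []. Qed.

Lemma gconj_Game GL GR : gconj (Game GL GR) = Game (map gconj GR) (map gconj GL).
Proof. by []. Qed.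

Lemma leftOpts_gconj G : leftOpts (gconj G) = map gconj (rightOpts G).
Proof. by case: G. Qed.

Lemma rightOpts_gconj G : rightOpts (gconj G) = map gconj (leftOpts G).
Proof. by case: G. Qed.

Lemma leftOpts_halfpow k : leftOpts (halfpow k) = [:: g0].
Proof. by case: k. Qed.

(** * Bidding *)

(* The marker counts as half a dollar.  Outcomes are monotone only along [budget_le]:
   receiving the marker can hurt Left, who must then move after a tie; [g0] is won by
   Left in state [(0, false)] but lost in state [(0, true)]. *)
Definition weight_le p (m : bool) q (n : bool) := 2 * p + m <= 2 * q + n.

Definition budget_le p m q n := weight_le p m q n && (n ==> m).

Ltac state_arith := rewrite /budget_le /weight_le /=; lia.

Lemma budget_le_weight p m q n : budget_le p m q n -> weight_le p m q n.
Proof. by case/andP. Qed.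

Lemma budget_le_refl p m : budget_le p m p m.
Proof. by rewrite /budget_le /weight_le leqnn implybb. Qed.

Lemma budget_le_gain p m q n : budget_le p m q n -> ~~ m -> n -> False.
Proof. by case/andP=> _; case: m; case: n. Qed.

Lemma weight_le_trans p m q n a b :
  weight_le p m q n -> weight_le q n a b -> weight_le p m a b.
Proof. state_arith. Qed.

Section Bidding.

Variable TB : nat.

Definition left_move (GL : seq game) q m := has (fun G => outcome TB G q m) GL.
Definition right_move (GR : seq game) q m := all (fun G => outcome TB G q m) GR.

Definition bid_result GL GR p (lm : bool) l r :=
  if lm then
    if r < l then left_move GL (p - l) true || left_move GL (p - l) false
    else if l == r then left_move GL (p - l) false
    else right_move GR (p + r) true
  else
    if l < r then right_move GR (p + r) false && right_move GR (p + r) true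
    else if l == r then right_move GR (p + r) true
    else left_move GL (p - l) false.

Lemma outcomeP GL GR p lm : outcome TB (Game GL GR) p lm <->
  exists2 l, l <= p & forall r, r <= TB - p -> bid_result GL GR p lm l r.
Proof.
have left_move1 q b : has (fun G => has (outcome TB G q) [:: b]) GL = left_move GL q b.
  by apply: eq_has => G /=; rewrite orbF.
have left_move2 q : has (fun G => has (outcome TB G q) [:: true; false]) GL =
               left_move GL q true || left_move GL q false.
  by rewrite -has_predU; apply: eq_has => G /=; rewrite orbF.
have right_move1 q b : all (fun G => all (outcome TB G q) [:: b]) GR = right_move GR q b.
  by apply: eq_all => G /=; rewrite andbT.
have right_move2 q : all (fun G => all (outcome TB G q) [:: false; true]) GR =
               right_move GR q false && right_move GR q true.
  by rewrite -all_predI; apply: eq_all => G /=; rewrite andbT.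
have -> : outcome TB (Game GL GR) p lm =
    has (fun l => all (bid_result GL GR p lm l) (iota 0 (TB - p).+1)) (iota 0 p.+1).
  apply: eq_has => l; apply: eq_all => r.
  by rewrite /bid_result -left_move2 -right_move2 -!left_move1 -!right_move1.
split=> [/hasP[l] | [l Hl win]].
- rewrite mem_iota => /andP[_ Hl] /allP win.
  by exists l => [|r Hr]; [|apply: win; rewrite mem_iota]; lia.
- apply/hasP; exists l; first by rewrite mem_iota; lia.
  by apply/allP => r; rewrite mem_iota => Hr; apply: win; lia.
Qed.

(* Left plays in Y the winning bid it has in X, one dollar lower when it gains the
   marker.  The last hypothesis covers the one case this misses: a zero bid in X that
   becomes a tie which Left must win in Y. *)
Lemma outcome_copy XL XR YL YR p m q n :
  weight_le p m q n -> q <= TB -> outcome TB (Game XL XR) p m ->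
  (forall a b a' b', budget_le a b a' b' -> a' <= TB ->
     left_move XL a b -> left_move YL a' b') ->
  (forall a b a' b', budget_le a b a' b' -> a' <= TB -> weight_le q n a' b' ->
     right_move XR a b -> right_move YR a' b') ->
  (~~ m -> n -> forall a, p <= a -> a <= TB -> left_move YL a false) ->
  outcome TB (Game YL YR) q n.
Proof.
move=> Hw Hq /outcomeP[l Hl Xwin] HL HR Hgain; apply/outcomeP.
case: m n Hw Xwin HR Hgain => [] [] Hw Xwin HR Hgain; rewrite /weight_le /= in Hw.
- exists l => [|r Hr]; first lia.
  move: (Xwin r ltac:(lia)); rewrite /bid_result; case: (ltngtP l r) => _.
  + by move=> H; apply: HR H; state_arith.
  + by case/orP=> H; apply/orP; [left|right]; apply: HL H; state_arith.
  + by move=> H; apply: HL H; state_arith.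
- exists l => [|r Hr]; first lia.
  move: (Xwin r ltac:(lia)); rewrite /bid_result; case: (ltngtP l r) => Hlr.
  + by move=> H; apply/andP; split; apply: HR H; state_arith.
  + by case/orP=> H; apply: HL H; state_arith.
  + move=> _; move: (Xwin r.+1 ltac:(lia)); rewrite /bid_result.
    by case: (ltngtP l r.+1) => Hlr'; try lia; move=> H; apply: HR H; state_arith.
- case: l Hl Xwin => [|l] Hl Xwin.
  + exists 0 => // r Hr; move: (Xwin r ltac:(lia)); rewrite /bid_result.
    case: (ltngtP 0 r) => // Hr0.
    * by case/andP=> _ H; apply: HR H; state_arith.
    * by rewrite subn0 => _; apply: Hgain => //; lia.
  + exists l => [|r Hr]; first lia.
    move: (Xwin r ltac:(lia)); rewrite /bid_result.
    case: (ltngtP l r) => Hlr; case: (ltngtP l.+1 r) => Hlr'; try lia.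
    * by case/andP=> _ H; apply: HR H; state_arith.
    * by move=> H; apply: HR H; state_arith.
    * by move=> H; apply/orP; right; apply: HL H; state_arith.
    * by move=> H; apply: HL H; state_arith.
- exists l => [|r Hr]; first lia.
  move: (Xwin r ltac:(lia)); rewrite /bid_result; case: (ltngtP l r) => _.
  + by case/andP=> H1 H2; apply/andP; split; [apply: HR H1|apply: HR H2]; state_arith.
  + by move=> H; apply: HL H; state_arith.
  + by move=> H; apply: HR H; state_arith.
Qed.

End Bidding.

(** * Simulations *)

Inductive sim : game -> game -> Prop :=
  SimGame GL GR HL HR :
    (forall G, List.In G GL -> exists2 H, List.In H HL & sim G H) ->
    (forall H, List.In H HR -> exists2 G, List.In G GR & sim G H) ->
    sim (Game GL GR) (Game HL HR).

Lemma sim_intro G H :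
  (forall G', List.In G' (leftOpts G) -> exists2 H', List.In H' (leftOpts H) & sim G' H') ->
  (forall H', List.In H' (rightOpts H) ->
     exists2 G', List.In G' (rightOpts G) & sim G' H') ->
  sim G H.
Proof. by case: G; case: H; constructor. Qed.

Lemma sim_inv G H : sim G H ->
  (forall G', List.In G' (leftOpts G) -> exists2 H', List.In H' (leftOpts H) & sim G' H') /\
  (forall H', List.In H' (rightOpts H) ->
     exists2 G', List.In G' (rightOpts G) & sim G' H').
Proof. by case. Qed.

Lemma sim_outcome_budget TB G H p m q n : sim G H -> budget_le p m q n -> q <= TB ->
  outcome TB G p m -> outcome TB H q n.
Proof.
elim/game_ind_in: G H p m q n => GL GR IHL IHR [HL HR] p m q n /sim_inv[simL simR] Hb Hq.
move=> Gwin; apply: (outcome_copy (budget_le_weight Hb) Hq Gwin).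
- move=> a b a' b' Hb' Ha' /has_In[G [HG G_win]].
  have [H HH GH] := simL G HG; apply/has_In; exists H; split=> //.
  exact: IHL Hb' Ha' G_win.
- move=> a b a' b' Hb' Ha' _ /all_In G_win; apply/all_In => H HH.
  have [G HG GH] := simR H HH; exact: IHR Hb' Ha' (G_win G HG).
- by move=> m0 n1; case: (budget_le_gain Hb m0 n1).
Qed.

Lemma sim_outcome TB G H p m : sim G H -> p <= TB -> outcome TB G p m -> outcome TB H p m.
Proof. by move=> GH; apply: sim_outcome_budget GH (budget_le_refl p m). Qed.

Lemma sim_refl G : sim G G.
Proof.
elim/game_ind_in: G => GL GR IHL IHR; constructor.
- by move=> G HG; exists G; last exact: IHL.
- by move=> G HG; exists G; last exact: IHR.
Qed.

Lemma sim_trans A B C : sim A B -> sim B C -> sim A C.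
Proof.
elim/game_ind_in: A B C => AL AR IHL IHR B C /sim_inv[ABL ABR] /sim_inv[BCL BCR].
apply: sim_intro => X HX.
- have [Y HY XY] := ABL X HX; have [Z HZ YZ] := BCL Y HY.
  by exists Z; last exact: IHL XY YZ.
- have [Y HY YX] := BCR X HX; have [Z HZ ZY] := ABR Y HY.
  by exists Z; last exact: IHR ZY YX.
Qed.

Lemma outcome_mono TB G p m q n : budget_le p m q n -> q <= TB ->
  outcome TB G p m -> outcome TB G q n.
Proof. exact: sim_outcome_budget (sim_refl G). Qed.

Lemma sim_add A A' B B' : sim A A' -> sim B B' -> sim (gadd A B) (gadd A' B').
Proof.
elim/game_ind_in: A A' B B' => AL AR IHAL IHAR A' B B' SA.
elim/game_ind_in: B B' => BL BR IHBL IHBR B' SB.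
have [SAL SAR] := sim_inv SA; have [SBL SBR] := sim_inv SB.
apply: sim_intro => X.
- case/in_leftOpts_gadd => -[Y HY ->].
  + have [Y' HY' S] := SAL Y HY.
    by exists (gadd Y' B'); [exact: in_leftOpts_gaddl | exact: IHAL].
  + have [Y' HY' S] := SBL Y HY.
    by exists (gadd A' Y'); [exact: in_leftOpts_gaddr | exact: IHBL].
- case/in_rightOpts_gadd => -[Y HY ->].
  + have [Y' HY' S] := SAR Y HY.
    by exists (gadd Y' (Game BL BR)); [exact: in_rightOpts_gaddl | exact: IHAR].
  + have [Y' HY' S] := SBR Y HY.
    by exists (gadd (Game AL AR) Y'); [exact: in_rightOpts_gaddr | exact: IHBR].
Qed.

Lemma sim_addC A B : sim (gadd A B) (gadd B A).
Proof.
elim/game_ind_in: A B => AL AR IHAL IHAR B.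
elim/game_ind_in: B => BL BR IHBL IHBR.
apply: sim_intro => X.
- case/in_leftOpts_gadd => -[Y HY ->].
  + by exists (gadd (Game BL BR) Y); [exact: in_leftOpts_gaddr | exact: IHAL].
  + by exists (gadd Y (Game AL AR)); [exact: in_leftOpts_gaddl | exact: IHBL].
- case/in_rightOpts_gadd => -[Y HY ->].
  + by exists (gadd (Game AL AR) Y); [exact: in_rightOpts_gaddr | exact: IHBR].
  + by exists (gadd Y (Game BL BR)); [exact: in_rightOpts_gaddl | exact: IHAR].
Qed.

Lemma sim_addA A B C : sim (gadd (gadd A B) C) (gadd A (gadd B C)).
Proof.
elim/game_ind_in: A B C => AL AR IHAL IHAR B C.
elim/game_ind_in: B C => BL BR IHBL IHBR C.
elim/game_ind_in: C => CL CR IHCL IHCR.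
apply: sim_intro => X.
- case/in_leftOpts_gadd => -[Y + ->]; last first.
    by move=> HY; exists (gadd (Game AL AR) (gadd (Game BL BR) Y));
      [apply/in_leftOpts_gaddr/in_leftOpts_gaddr | exact: IHCL].
  case/in_leftOpts_gadd => -[Z HZ ->].
  + by exists (gadd Z (gadd (Game BL BR) (Game CL CR)));
      [exact: in_leftOpts_gaddl | exact: IHAL].
  + by exists (gadd (Game AL AR) (gadd Z (Game CL CR)));
      [apply/in_leftOpts_gaddr/in_leftOpts_gaddl | exact: IHBL].
- case/in_rightOpts_gadd => -[Y HY ->].
    by exists (gadd (gadd Y (Game BL BR)) (Game CL CR));
      [apply/in_rightOpts_gaddl/in_rightOpts_gaddl | exact: IHAR].
  case/in_rightOpts_gadd: HY => -[Z HZ ->].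
  + by exists (gadd (gadd (Game AL AR) Z) (Game CL CR));
      [apply/in_rightOpts_gaddl/in_rightOpts_gaddr | exact: IHBR].
  + by exists (gadd (gadd (Game AL AR) (Game BL BR)) Z);
      [exact: in_rightOpts_gaddr | exact: IHCR].
Qed.

Lemma sim_addA_sym A B C : sim (gadd A (gadd B C)) (gadd (gadd A B) C).
Proof.
apply: sim_trans (sim_addC _ _) _; apply: sim_trans (sim_addA _ _ _) _.
apply: sim_trans (sim_addC _ _) _; apply: sim_trans (sim_addA _ _ _) _.
exact: sim_addC.
Qed.

Lemma sim_add0l A : sim (gadd g0 A) A.
Proof.
elim/game_ind_in: A => AL AR IHL IHR; apply: sim_intro => X.
- by case/in_leftOpts_gadd => -[Y HY ->] //; exists Y; last exact: IHL.
- by move=> HX; exists (gadd g0 X); [exact: in_rightOpts_gaddr | exact: IHR].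
Qed.

Lemma sim_add0l_sym A : sim A (gadd g0 A).
Proof.
elim/game_ind_in: A => AL AR IHL IHR; apply: sim_intro => X.
- by move=> HX; exists (gadd g0 X); [exact: in_leftOpts_gaddr | exact: IHL].
- by case/in_rightOpts_gadd => -[Y HY ->] //; exists Y; last exact: IHR.
Qed.

Lemma sim_add0r A : sim (gadd A g0) A.
Proof. exact: sim_trans (sim_addC A g0) (sim_add0l A). Qed.

Lemma sim_add0r_sym A : sim A (gadd A g0).
Proof. exact: sim_trans (sim_add0l_sym A) (sim_addC g0 A). Qed.

(** * The order on games *)

Section Order.

Variable TB : nat.

Lemma gge_trans A B C : gge TB A B -> gge TB B C -> gge TB A C.
Proof. by move=> AB BC X p m Hp /BC-/(_ Hp)/AB; apply. Qed.

Lemma gge_sim A B : sim B A -> gge TB A B.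
Proof. by move=> BA X p m Hp; apply: sim_outcome Hp; apply: sim_add BA (sim_refl X). Qed.

Lemma geq_refl A : geq TB A A.
Proof. by split. Qed.

Lemma geq_sym A B : geq TB A B -> geq TB B A.
Proof. by case. Qed.

Lemma geq_trans A B C : geq TB A B -> geq TB B C -> geq TB A C.
Proof.
by move=> [AB BA] [BC CB]; split; [apply: (gge_trans AB BC) | apply: (gge_trans CB BA)].
Qed.

Lemma geq_sim A B : sim A B -> sim B A -> geq TB A B.
Proof. by move=> AB BA; split; apply: gge_sim. Qed.

Lemma geq_addC A B : geq TB (gadd A B) (gadd B A).
Proof. exact: geq_sim (sim_addC A B) (sim_addC B A). Qed.

Lemma geq_addA A B C : geq TB (gadd (gadd A B) C) (gadd A (gadd B C)).
Proof. exact: geq_sim (sim_addA A B C) (sim_addA_sym A B C). Qed.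

Lemma geq_add0l A : geq TB (gadd g0 A) A.
Proof. exact: geq_sim (sim_add0l A) (sim_add0l_sym A). Qed.

Lemma geq_add0r A : geq TB (gadd A g0) A.
Proof. exact: geq_sim (sim_add0r A) (sim_add0r_sym A). Qed.

Lemma outcome_geq A B p m : p <= TB -> geq TB A B -> outcome TB A p m = outcome TB B p m.
Proof.
move=> Hp [AB BA]; apply/idP/idP => win.
- apply: (sim_outcome (sim_add0r B) Hp); apply: (BA _ _ _ Hp).
  exact: sim_outcome (sim_add0r_sym A) Hp win.
- apply: (sim_outcome (sim_add0r A) Hp); apply: (AB _ _ _ Hp).
  exact: sim_outcome (sim_add0r_sym B) Hp win.
Qed.

Lemma gge_add2r A A' B : gge TB A A' -> gge TB (gadd A B) (gadd A' B).
Proof.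
move=> AA' X p m Hp.
rewrite (outcome_geq _ Hp (geq_addA A B X)) (outcome_geq _ Hp (geq_addA A' B X)).
exact: AA'.
Qed.

Lemma gge_add2l A B B' : gge TB B B' -> gge TB (gadd A B) (gadd A B').
Proof.
move=> BB'; apply: (gge_trans (proj1 (geq_addC A B))).
exact: (gge_trans (gge_add2r BB') (proj1 (geq_addC B' A))).
Qed.

Lemma geq_add A A' B B' : geq TB A A' -> geq TB B B' -> geq TB (gadd A B) (gadd A' B').
Proof.
move=> [AA' A'A] [BB' B'B]; split.
- exact: (gge_trans (gge_add2r AA') (gge_add2l BB')).
- exact: (gge_trans (gge_add2r A'A) (gge_add2l B'B)).
Qed.

Lemma geq_addCA A B C : geq TB (gadd A (gadd B C)) (gadd B (gadd A C)).
Proof.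
apply: geq_trans (geq_sym (geq_addA _ _ _)) _.
exact: geq_trans (geq_add (geq_addC A B) (geq_refl C)) (geq_addA _ _ _).
Qed.

Lemma geq_addACA A B C D :
  geq TB (gadd (gadd A B) (gadd C D)) (gadd (gadd A C) (gadd B D)).
Proof.
apply: geq_trans (geq_addA _ _ _) _.
exact: geq_trans (geq_add (geq_refl A) (geq_addCA B C D)) (geq_sym (geq_addA _ _ _)).
Qed.

Lemma geq_gge A A' B B' : geq TB A A' -> geq TB B B' -> gge TB A B -> gge TB A' B'.
Proof. by move=> [_ A'A] [BB' _] AB; apply: (gge_trans A'A (gge_trans AB BB')). Qed.

Lemma geq_ggt A A' B B' : geq TB A A' -> geq TB B B' -> ggt TB A B -> ggt TB A' B'.
Proof.
move=> AA' BB' [AB BA]; split; first exact: geq_gge AA' BB' AB.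
by move=> B'A'; apply: BA; apply: geq_gge (geq_sym BB') (geq_sym AA') B'A'.
Qed.

Lemma isNumber_geq A B : geq TB A B -> isNumber TB B -> isNumber TB A.
Proof.
move=> + HB; case: B / HB => B H BH HL HR HLt HRt AB.
exact: isNumber_intro (geq_trans AB BH) HL HR HLt HRt.
Qed.

End Order.

(** * Conjugation *)

Lemma gconjK G : gconj (gconj G) = G.
Proof.
elim/game_ind_in: G => GL GR IHL IHR /=; rewrite -!map_comp.
by congr Game; rewrite -[RHS]map_id; apply: List.map_ext_in.
Qed.

Lemma gconj_add A B : gconj (gadd A B) = gadd (gconj A) (gconj B).
Proof.
elim/game_ind_in: A B => AL AR IHAL IHAR B.
elim/game_ind_in: B => BL BR IHBL IHBR.
rewrite [in LHS]gadd_Game !gconj_Game gadd_Game !map_cat -!map_comp.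
by congr Game; congr cat; apply: List.map_ext_in => X HX;
  [exact: IHAR | exact: IHBR | exact: IHAL | exact: IHBL].
Qed.

Lemma monotone_threshold (A : pred nat) Q :
  (forall r r', r <= r' -> r' <= Q -> A r -> A r') ->
  exists2 t, t <= Q.+1 & forall r, r <= Q -> A r = (t <= r).
Proof.
move=> Amono; have witness : exists r, (Q < r) || A r by exists Q.+1; rewrite ltnSn.
have [t Ht tmin] := ex_minnP witness.
exists t => [|r Hr]; first by apply: tmin; rewrite ltnSn.
apply/idP/idP => [Ar | le_tr]; first by apply: tmin; rewrite Ar orbT.
by move: Ht; rewrite ltnNge (leq_trans le_tr Hr) /=; apply: Amono.
Qed.

(* The Right bids that win the auction and still leave Left winning are those above a
   threshold t; Left bids t - 1 if it holds the marker and t otherwise. *)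
Section Determinacy.

Variables (TB : nat) (GL GR : seq game) (P : nat).
Hypothesis HP : P <= TB.

Let left_move_mono q m q' m' : budget_le q m q' m' -> q' <= TB ->
  left_move TB GL q m -> left_move TB GL q' m'.
Proof.
move=> Hb Hq' /has_In[G [HG Gwin]]; apply/has_In; exists G; split=> //.
exact: outcome_mono Hb Hq' Gwin.
Qed.

Let right_move_mono q m q' m' : budget_le q m q' m' -> q' <= TB ->
  right_move TB GR q m -> right_move TB GR q' m'.
Proof.
move=> Hb Hq' /all_In Gwin; apply/all_In => G HG.
exact: outcome_mono Hb Hq' (Gwin G HG).
Qed.

Lemma bid_determinacy_left_marker :
  (forall r, r <= TB - P -> exists2 l, l <= P & bid_result TB GL GR P true l r) ->
  exists2 l, l <= P & forall r, r <= TB - P -> bid_result TB GL GR P true l r.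
Proof.
move=> reply; set Q := TB - P.
pose A r := right_move TB GR (P + r) true.
have [t Ht At] : exists2 t, t <= Q.+1 & forall r, r <= Q -> A r = (t <= r).
  by apply: monotone_threshold => r r' Hr Hr'; apply: right_move_mono; state_arith.
have lose_or_counter r : r <= Q -> A r /\ 0 < r \/ r <= P /\ left_move TB GL (P - r) false.
  move=> Hr; have [l Hl] := reply r Hr; rewrite /bid_result; case: (ltngtP l r) => Hlr.
  - by move=> Ar; left; split; [exact: Ar | lia].
  - move=> H; right; split; first lia.
    by case/orP: H => H; apply: (left_move_mono _ _ H); state_arith.
  - by move=> H; right; rewrite -Hlr.
have [Hl Dl] : t.-1 <= P /\ left_move TB GL (P - t.-1) false.
  case: (lose_or_counter t.-1) => [| [] | //]; first lia.
  by rewrite -/(A _) At; lia.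
exists t.-1 => // r Hr; rewrite /bid_result; case: (ltngtP t.-1 r) => Htr.
- by change (A r); rewrite At //; lia.
- by rewrite Dl orbT.
- exact: Dl.
Qed.

Lemma bid_determinacy_right_marker :
  (forall r, r <= TB - P -> exists2 l, l <= P & bid_result TB GL GR P false l r) ->
  exists2 l, l <= P & forall r, r <= TB - P -> bid_result TB GL GR P false l r.
Proof.
move=> reply; set Q := TB - P.
pose B r := right_move TB GR (P + r) true.
have [t Ht Bt] : exists2 t, t <= Q.+1 & forall r, r <= Q -> B r = (t <= r).
  by apply: monotone_threshold => r r' Hr Hr'; apply: right_move_mono; state_arith.
have lose_or_counter r : r <= Q -> B r \/ r < P /\ left_move TB GL (P - r.+1) false.
  move=> Hr; have [l Hl] := reply r Hr; rewrite /bid_result; case: (ltngtP l r) => Hlr.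
  - by case/andP=> _; left.
  - by move=> H; right; split; [lia | apply: (left_move_mono _ _ H); state_arith].
  - by rewrite -Hlr; left.
have [Hl Ct] : t <= P /\ (0 < t -> left_move TB GL (P - t) false).
  case: t Ht Bt => [|t] Ht Bt; first by [].
  case: (lose_or_counter t) => [| Bt' | []]; first lia.
  - by move: Bt'; rewrite -/(B _) Bt //; lia.
  - by move=> ? ?; split.
exists t => // r Hr; rewrite /bid_result; case: (ltngtP t r) => Htr.
- have Btt : B t by rewrite Bt //; lia.
  by apply/andP; split; apply: right_move_mono Btt; state_arith.
- by apply: Ct; lia.
- by change (B r); rewrite Bt //; lia.
Qed.

Lemma bid_determinacy lm :
  (forall r, r <= TB - P -> exists2 l, l <= P & bid_result TB GL GR P lm l r) ->
  exists2 l, l <= P & forall r, r <= TB - P -> bid_result TB GL GR P lm l r.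
Proof.
by case: lm; [apply: bid_determinacy_left_marker | apply: bid_determinacy_right_marker].
Qed.

End Determinacy.

Section Conjugate.

Variable TB : nat.

Let gconj_dual G := forall p m, p <= TB ->
  outcome TB (gconj G) p m = ~~ outcome TB G (TB - p) (~~ m).

Lemma left_move_gconj GR q m : q <= TB -> (forall G, List.In G GR -> gconj_dual G) ->
  left_move TB (map gconj GR) q m = ~~ right_move TB GR (TB - q) (~~ m).
Proof.
move=> Hq IH; rewrite /left_move /right_move has_map -has_predC.
by apply: eq_has_In => G HG /=; apply: IH.
Qed.

Lemma right_move_gconj GL q m : q <= TB -> (forall G, List.In G GL -> gconj_dual G) ->
  right_move TB (map gconj GL) q m = ~~ left_move TB GL (TB - q) (~~ m).
Proof.
move=> Hq IH; rewrite /left_move /right_move all_map -all_predC.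
by apply: eq_all_In => G HG /=; apply: IH.
Qed.

Lemma bid_result_gconj GL GR p m l r :
  (forall G, List.In G GL -> gconj_dual G) -> (forall G, List.In G GR -> gconj_dual G) ->
  p <= TB -> l <= p -> r <= TB - p ->
  bid_result TB (map gconj GR) (map gconj GL) p m l r =
  ~~ bid_result TB GL GR (TB - p) (~~ m) r l.
Proof.
move=> IHL IHR Hp Hl Hr.
have LM b : left_move TB (map gconj GR) (p - l) b = ~~ right_move TB GR (TB - p + l) (~~ b).
  by rewrite left_move_gconj //; [congr (~~ right_move _ _ _ _); lia | lia].
have RM b : right_move TB (map gconj GL) (p + r) b = ~~ left_move TB GL (TB - p - r) (~~ b).
  by rewrite right_move_gconj //; [congr (~~ left_move _ _ _ _); lia | lia].
by rewrite /bid_result; case: m; case: (ltngtP l r) => _ /=; rewrite ?LM ?RM ?negb_and ?negb_or.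
Qed.

Lemma outcome_gconj G : gconj_dual G.
Proof.
elim/game_ind_in: G => GL GR IHL IHR p m Hp; rewrite gconj_Game.
pose Rwins l :=
  all (fun r => ~~ bid_result TB GL GR (TB - p) (~~ m) r l) (iota 0 (TB - p).+1).
apply/idP/idP => [/outcomeP[l Hl conj_win] | lose].
- apply/negP => /outcomeP[r Hr win].
  by have := conj_win r Hr; rewrite bid_result_gconj // win //; lia.
- case: (boolP (has Rwins (iota 0 p.+1))) => [/hasP[l] | /hasPn none].
  + rewrite mem_iota => /andP[_ Hl] /allP Hall; apply/outcomeP; exists l => [|r Hr]; first lia.
    by rewrite bid_result_gconj ?Hall ?mem_iota //; lia.
  + case/negP: lose; apply/outcomeP; apply: bid_determinacy; first exact: leq_subr.
    move=> l; rewrite subKn // => Hl.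
    have /allPn[r] : ~~ Rwins l by apply: none; rewrite mem_iota; lia.
    by rewrite mem_iota negbK => /andP[_ Hr] win; exists r => //; lia.
Qed.

Lemma gge_gconj A B : gge TB A B -> gge TB (gconj B) (gconj A).
Proof.
move=> AB X p m Hp.
have E C : outcome TB (gadd (gconj C) X) p m =
           ~~ outcome TB (gadd C (gconj X)) (TB - p) (~~ m).
  by rewrite -{1}(gconjK X) -gconj_add outcome_gconj.
by rewrite !E; apply: contra; apply: AB; lia.
Qed.

Lemma ggt_gconj A B : ggt TB A B -> ggt TB (gconj B) (gconj A).
Proof.
case=> AB BA; split; first exact: gge_gconj.
by move=> /gge_gconj; rewrite !gconjK.
Qed.

Lemma isNumber_gconj G : isNumber TB G -> isNumber TB (gconj G).
Proof.
elim=> {}G H [GH HG] _ IHL _ IHR HLt HRt.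
apply: (@isNumber_intro TB _ (gconj H)).
- by split; apply: gge_gconj.
- by rewrite leftOpts_gconj => X /List.in_map_iff[Y [<- HY]]; apply: IHR.
- by rewrite rightOpts_gconj => X /List.in_map_iff[Y [<- HY]]; apply: IHL.
- by rewrite leftOpts_gconj => X /List.in_map_iff[Y [<- HY]]; apply/ggt_gconj/HRt.
- by rewrite rightOpts_gconj => X /List.in_map_iff[Y [<- HY]]; apply/ggt_gconj/HLt.
Qed.

End Conjugate.

(** * Powers of one half *)

Section Halfpow.

Variable TB : nat.

Definition weight_dominant G := forall D p m q n, weight_le p m q n -> q <= TB ->
  outcome TB D p m -> outcome TB (gadd G D) q n.

Definition budget_dominant G := forall D p m q n, budget_le p m q n -> q <= TB ->
  outcome TB D p m -> outcome TB (gadd G D) q n.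

Lemma weight_dominant_budget G : weight_dominant G -> budget_dominant G.
Proof. by move=> GD D p m q n /budget_le_weight; apply: GD. Qed.

(* When Left gains the marker and its copied bid is 0, it moves to the given Left
   option of G instead. *)
Lemma dominant_copy G : (forall GR, List.In GR (rightOpts G) -> weight_dominant GR) ->
  forall D p m q n, weight_le p m q n -> q <= TB -> outcome TB D p m ->
  (~~ m -> n -> exists2 GL, List.In GL (leftOpts G) & budget_dominant GL) ->
  outcome TB (gadd G D) q n.
Proof.
move=> Rdom; elim/game_ind_in => DL DR IHL IHR p m q n Hw Hq Dwin gain.
rewrite (gameE (gadd G _)); apply: (outcome_copy Hw Hq Dwin).
- move=> a b a' b' Hb Ha' /has_In[D' [HD' D'win]]; apply/has_In.
  exists (gadd G D'); split; first exact: in_leftOpts_gaddr.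
  apply: (IHL D' HD' a b a' b' (budget_le_weight Hb) Ha' D'win).
  by move=> b0 b'1; case: (budget_le_gain Hb b0 b'1).
- move=> a b a' b' Hb Ha' Hw' /all_In D'win; apply/all_In => X.
  case/in_rightOpts_gadd => -[Y HY ->].
  + exact: (Rdom Y HY _ _ _ _ _ (weight_le_trans Hw Hw') Ha' Dwin).
  + apply: (IHR Y HY a b a' b' (budget_le_weight Hb) Ha' (D'win Y HY)).
    by move=> b0 b'1; case: (budget_le_gain Hb b0 b'1).
- move=> m0 n1 a Hpa Ha; have [GL HGL GLdom] := gain m0 n1.
  apply/has_In; exists (gadd GL (Game DL DR)); split; first exact: in_leftOpts_gaddl.
  move/negbTE: m0 Dwin => -> Dwin.
  by apply: (GLdom _ _ _ _ _ _ Ha Dwin); state_arith.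
Qed.

Lemma budget_dominant_of_rightOpts G :
  (forall GR, List.In GR (rightOpts G) -> weight_dominant GR) -> budget_dominant G.
Proof.
move=> Rdom D p m q n Hb Hq Dwin.
apply: (dominant_copy Rdom (budget_le_weight Hb) Hq Dwin).
by move=> m0 n1; case: (budget_le_gain Hb m0 n1).
Qed.

Lemma weight_dominant_of_options G :
  (forall GR, List.In GR (rightOpts G) -> weight_dominant GR) ->
  (exists2 GL, List.In GL (leftOpts G) & budget_dominant GL) -> weight_dominant G.
Proof. by move=> Rdom Ldom D p m q n Hw Hq Dwin; apply: (dominant_copy Rdom Hw Hq Dwin). Qed.

Lemma budget_dominant_g0 : budget_dominant g0.
Proof. exact: budget_dominant_of_rightOpts. Qed.

Lemma weight_dominant_geq G G' : geq TB G G' -> weight_dominant G -> weight_dominant G'.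
Proof.
move=> GG' GD D p m q n Hw Hq Dwin.
by rewrite (outcome_geq _ Hq (geq_add (geq_sym GG') (geq_refl TB D))); apply: GD Hw Hq Dwin.
Qed.

Lemma weight_dominant_halfpow k : weight_dominant (halfpow k).
Proof.
have Ldom k' : exists2 GL, List.In GL (leftOpts (halfpow k')) & budget_dominant GL.
  by exists g0; [rewrite leftOpts_halfpow; left | exact: budget_dominant_g0].
elim: k => [|k IHk]; apply: weight_dominant_of_options (Ldom _) => //.
by move=> GR [<- | []].
Qed.

Definition halfpow_diff j k := gadd (halfpow j) (gconj (halfpow k)).

Lemma dominant_halfpow_diff k :
  (forall j, j < k -> weight_dominant (halfpow_diff j k)) /\
  budget_dominant (halfpow_diff k k).
Proof.
have Rdom j k' : (forall j', j = j'.+1 -> weight_dominant (halfpow_diff j' k')) ->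
    forall GR, List.In GR (rightOpts (halfpow_diff j k')) -> weight_dominant GR.
  move=> IHj GR /in_rightOpts_gadd[[H HH ->] | [H HH ->]].
  - by case: j IHj HH => [|j] IHj // [<- | []]; apply: IHj.
  - move: HH; rewrite rightOpts_gconj leftOpts_halfpow => -[<- | []].
    exact: weight_dominant_geq (geq_sym (geq_add0r TB _)) (weight_dominant_halfpow j).
elim: k => [|k [IHlt IHeq]].
  by split=> //; apply/budget_dominant_of_rightOpts/Rdom.
have Ldom j : j < k.+1 ->
    exists2 GL, List.In GL (leftOpts (halfpow_diff j k.+1)) & budget_dominant GL.
  move=> Hj; exists (halfpow_diff j k); first by apply: in_leftOpts_gaddr; left.
  case: (ltngtP j k) Hj => [/IHlt/weight_dominant_budget // | | -> //]; lia.
have dom_lt j : j < k.+1 -> weight_dominant (halfpow_diff j k.+1).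
  elim: j => [|j IHj] Hj; apply: weight_dominant_of_options (Ldom _ Hj).
  - by apply: Rdom.
  - by apply: Rdom => j' [<-]; apply: IHj; lia.
by split=> //; apply/budget_dominant_of_rightOpts/Rdom => j' [<-]; apply: dom_lt.
Qed.

Lemma outcome_g0_right_marker : outcome TB g0 0 false.
Proof. by apply/outcomeP; exists 0 => // -[]. Qed.

Lemma outcome_g0_left_marker : outcome TB g0 0 true = false.
Proof. by apply/negP => /outcomeP[l]; rewrite leqn0 => /eqP-> /(_ 0 (leq0n _)). Qed.

Lemma gge0_budget_dominant G : budget_dominant G -> gge TB G g0.
Proof.
move=> GD X p m Hp; rewrite (outcome_geq _ Hp (geq_add0l TB X)) => Xwin.
exact: (GD _ _ _ _ _ (budget_le_refl p m) Hp Xwin).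
Qed.

Lemma outcome_weight_dominant G : weight_dominant G -> outcome TB G 0 true.
Proof.
move=> GD; rewrite -(outcome_geq _ (leq0n TB) (geq_add0r TB G)).
exact: (GD g0 0 false 0 true isT (leq0n TB) outcome_g0_right_marker).
Qed.

Lemma gge_halfpow0 k : gge TB (halfpow k) g0.
Proof. exact/gge0_budget_dominant/weight_dominant_budget/weight_dominant_halfpow. Qed.

Lemma sim_halfpowS k : sim (halfpow k.+1) (halfpow k).
Proof.
elim: k => [|k IHk]; apply: sim_intro => // X [<- | []].
- by exists g0; [left | exact: sim_refl].
- by exists g0; [left | exact: sim_refl].
- by exists (halfpow k.+1); first left.
Qed.

Lemma gge_halfpowS k : gge TB (halfpow k) (halfpow k.+1).
Proof. exact/gge_sim/sim_halfpowS. Qed.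

Lemma geq_halfpow_subrr k : geq TB (halfpow_diff k k) g0.
Proof.
have diff_ge0 := gge0_budget_dominant (proj2 (dominant_halfpow_diff k)).
split=> //; have := gge_gconj diff_ge0.
rewrite /halfpow_diff gconj_add gconjK => H.
exact: (gge_trans H (proj1 (geq_addC TB _ _))).
Qed.

Lemma outcome_halfpow k : outcome TB (halfpow k) 0 true.
Proof. exact/outcome_weight_dominant/weight_dominant_halfpow. Qed.

Lemma outcome_halfpow_diffS k : outcome TB (halfpow_diff k k.+1) 0 true.
Proof. exact/outcome_weight_dominant/(proj1 (dominant_halfpow_diff k.+1))/ltnSn. Qed.

End Halfpow.

(** * Sums of powers of one half *)

Fixpoint halfpow_sum (ks : seq nat) : game :=
  if ks is k :: ks' then gadd (halfpow k) (halfpow_sum ks') else g0.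

Definition halfpow_sum_size (ks : seq nat) := sumn [seq k.+1 | k <- ks].

Section HalfpowSum.

Variable TB : nat.

Lemma geq_halfpow_sum_subrr ks : geq TB (gadd (halfpow_sum ks) (gconj (halfpow_sum ks))) g0.
Proof.
elim: ks => [|k ks IH] /=; first exact: geq_add0l.
rewrite gconj_add; apply: geq_trans (geq_addACA _ _ _ _ _) _.
exact: geq_trans (geq_add (geq_halfpow_subrr TB k) IH) (geq_add0l TB g0).
Qed.

Lemma not_gge_of_outcome A B : geq TB (gadd A (gconj A)) g0 ->
  outcome TB (gadd B (gconj A)) 0 true -> ~ gge TB A B.
Proof.
move=> AA Bwin AB; have := AB (gconj A) 0 true (leq0n TB) Bwin.
by rewrite (outcome_geq _ (leq0n TB) AA) outcome_g0_left_marker.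
Qed.

Lemma not_gge_halfpow_sum_add k ks :
  ~ gge TB (halfpow_sum ks) (gadd (halfpow k) (halfpow_sum ks)).
Proof.
apply: not_gge_of_outcome (geq_halfpow_sum_subrr ks) _.
rewrite (outcome_geq _ (leq0n TB) (geq_addA TB _ _ _)).
rewrite (outcome_geq _ (leq0n TB) (geq_add (geq_refl TB _) (geq_halfpow_sum_subrr ks))).
by rewrite (outcome_geq _ (leq0n TB) (geq_add0r TB _)) outcome_halfpow.
Qed.

Lemma not_gge_halfpow_sum_addS k ks :
  ~ gge TB (gadd (halfpow k.+1) (halfpow_sum ks)) (gadd (halfpow k) (halfpow_sum ks)).
Proof.
apply: not_gge_of_outcome (geq_halfpow_sum_subrr (k.+1 :: ks)) _.
rewrite gconj_add (outcome_geq _ (leq0n TB) (geq_addACA TB _ _ _ _)).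
rewrite (outcome_geq _ (leq0n TB) (geq_add (geq_refl TB _) (geq_halfpow_sum_subrr ks))).
by rewrite (outcome_geq _ (leq0n TB) (geq_add0r TB _)) outcome_halfpow_diffS.
Qed.

Lemma leftOpts_halfpow_sum ks L : List.In L (leftOpts (halfpow_sum ks)) ->
  exists k ks', [/\ geq TB L (halfpow_sum ks'),
    geq TB (halfpow_sum ks) (gadd (halfpow k) (halfpow_sum ks')) &
    halfpow_sum_size ks' < halfpow_sum_size ks].
Proof.
elim: ks L => [|k ks IH] L //= /in_leftOpts_gadd[[Z HZ ->] | [L' HL' ->]].
- move: HZ; rewrite leftOpts_halfpow => -[<- | []].
  exists k, ks; split; [exact: geq_add0l | exact: geq_refl | rewrite /halfpow_sum_size /=; lia].
- have [k' [ks' [L'S SE lt]]] := IH L' HL'.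
  exists k', (k :: ks'); split.
  + exact: geq_add (geq_refl TB _) L'S.
  + exact: geq_trans (geq_add (geq_refl TB _) SE) (geq_addCA _ _ _ _).
  + by move: lt; rewrite /halfpow_sum_size /=; lia.
Qed.

Lemma rightOpts_halfpow_sum ks R : List.In R (rightOpts (halfpow_sum ks)) ->
  exists k ks', [/\ geq TB R (halfpow_sum (k :: ks')),
    geq TB (halfpow_sum ks) (gadd (halfpow k.+1) (halfpow_sum ks')) &
    halfpow_sum_size (k :: ks') < halfpow_sum_size ks].
Proof.
elim: ks R => [|k ks IH] R //= /in_rightOpts_gadd[[Z HZ ->] | [R' HR' ->]].
- case: k HZ => [|k] // [<- | []].
  exists k, ks; split; [exact: geq_refl | exact: geq_refl | rewrite /halfpow_sum_size /=; lia].
- have [k' [ks' [R'S SE lt]]] := IH R' HR'.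
  exists k', (k :: ks'); split.
  + exact: geq_trans (geq_add (geq_refl TB _) R'S) (geq_addCA _ _ _ _).
  + exact: geq_trans (geq_add (geq_refl TB _) SE) (geq_addCA _ _ _ _).
  + by move: lt; rewrite /halfpow_sum_size /=; lia.
Qed.

Lemma isNumber_halfpow_sum ks : isNumber TB (halfpow_sum ks).
Proof.
have [n] := ubnP (halfpow_sum_size ks); elim: n ks => // n IH ks lt_ks_n.
apply: (isNumber_intro (geq_refl TB (halfpow_sum ks))).
- move=> L /leftOpts_halfpow_sum[k [ks' [LS _ lt]]].
  by apply: isNumber_geq LS (IH _ _); lia.
- move=> R /rightOpts_halfpow_sum[k [ks' [RS _ lt]]].
  by apply: isNumber_geq RS (IH _ _); lia.
- move=> L /leftOpts_halfpow_sum[k [ks' [LS SE _]]].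
  apply: geq_ggt (geq_sym SE) (geq_sym LS) _; split; last exact: not_gge_halfpow_sum_add.
  exact: (gge_trans (gge_add2r (@gge_halfpow0 TB k)) (proj1 (geq_add0l TB _))).
- move=> R /rightOpts_halfpow_sum[k [ks' [RS SE _]]].
  apply: geq_ggt (geq_sym RS) (geq_sym SE) _; split; last exact: not_gge_halfpow_sum_addS.
  exact: (gge_add2r (@gge_halfpowS TB k)).
Qed.

Lemma geq_ncopies_halfpow m k : geq TB (ncopies m (halfpow k)) (halfpow_sum (nseq m k)).
Proof.
elim: m => [|[|m] IH]; first exact: geq_refl.
- exact: geq_sym (geq_add0r TB _).
- exact: geq_trans (geq_add IH (geq_refl TB _)) (geq_addC TB _ _).
Qed.

End HalfpowSum.

Theorem mainTheorem19 (TB : nat) (n : int) (k : nat) (hk : (0 < k)%N) :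
  isNumber TB (dyadic n k).
Proof.
have isNumber_ncopies m : isNumber TB (ncopies m (halfpow k)).
  exact: isNumber_geq (geq_ncopies_halfpow TB m k) (isNumber_halfpow_sum TB _).
by case: n => m; [exact: isNumber_ncopies | exact/isNumber_gconj/isNumber_ncopies].
Qed.
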